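(* For any positive integer $g$, the number of numerical semigroups $\Lambda$ with genus $g$ satisfying $f(\Lambda) < 2 m(\Lambda)$ is $F_{g+1}$.
   Context: A numerical semigroup is a subset $\Lambda\subseteq\mathbb{N}_0$ closed under addition, containing $0$, with finite complement in $\mathbb{N}_0$. Its genus is $|\mathbb{N}_0\setminus\Lambda|$, its multiplicity $m(\Lambda)$ is its smallest nonzero element, and its Frobenius number $f(\Lambda)$ is the largest element of $\mathbb{N}_0\setminus\Lambda$. $F_n$ are the Fibonacci numbers: $F_1=F_2=1$, $F_{n+2}=F_{n+1}+F_n$. *)

From mathcomp Require Import all_boot.
From mathcomp Require Import boolp classical_sets cardinality.
Set Implicit Arguments. Unset Strict Implicit. Unset Printing Implicit Defensive.
Local Open Scope classical_set_scope.
Local Open Scope card_scope.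

Fixpoint fib (n : nat) : nat :=
  match n with
  | 0 => 0
  | 1 => 1
  | (m.+1 as n').+1 => fib n' + fib m
  end.

Definition numerical_semigroup (L : set nat) : Prop :=
  L 0 /\ (forall x y, L x -> L y -> L (x + y)) /\ finite_set (~` L).

Definition has_genus (L : set nat) (g : nat) : Prop := (~` L) #= `I_g.

Definition is_multiplicity (L : set nat) (m : nat) : Prop :=
  (0 < m)%N /\ L m /\ (forall k, (0 < k)%N -> (k < m)%N -> ~ L k).

Definition is_frobenius (L : set nat) (f : nat) : Prop :=
  ~ L f /\ (forall k, (f < k)%N -> L k).

From mathcomp Require Import all_boot.
From mathcomp Require Import boolp classical_sets cardinality.
From mathcomp Require Import zify.

Set Implicit Arguments.
Unset Strict Implicit.
Unset Printing Implicit Defensive.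

Local Open Scope classical_set_scope.
Local Open Scope card_scope.

(* If f < 2m, every sum of two nonzero elements is >= 2m > f, so the
   semigroup is determined by m and by an arbitrary choice of which of
   m + 1, ..., 2m - 1 it contains.  Coding that choice by a bit sequence of
   length m - 1, the genus is (m - 1) + #(excluded elements), i.e. the sum of
   weights 1 per included and 2 per excluded element.  Bit sequences of
   weight g are compositions of g into parts 1 and 2, counted by F_(g+1). *)

Definition weight (s : seq bool) : nat := (size s + count negb s)%N.

Lemma weight_cons b s : weight (b :: s) = (weight s + (if b then 1 else 2))%N.
Proof. by rewrite /weight /=; case: b => /=; lia. Qed.

Lemma weight_eq0 s : weight s = 0%N -> s = [::].
Proof. by case: s => // b s; rewrite weight_cons; case: b; lia. Qed.

Fixpoint enum_weight (n : nat) : seq (seq bool) :=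
  match n with
  | 0 => [:: [::]]
  | 1 => [:: [:: true]]
  | (k.+1 as n').+1 =>
      map (cons true) (enum_weight n') ++ map (cons false) (enum_weight k)
  end.

Lemma cons_inj (T : Type) (x : T) : injective (cons x).
Proof. by move=> s t [->]. Qed.
Arguments cons_inj {T} x.

Lemma cons_notin_map_cons (T : eqType) (b c : T) s (t : seq (seq T)) :
  b != c -> (b :: s \in map (cons c) t) = false.
Proof. by move=> bc; apply/mapP => -[x _ [eb _]]; rewrite eb eqxx in bc. Qed.

Lemma mem_enum_weight s n : (s \in enum_weight n) = (weight s == n).
Proof.
elim: s n => [|b s IH] [|[|n]] //=.
- by rewrite mem_cat; apply/negP => /orP[] /mapP[].
- rewrite inE weight_cons; case: b; last by rewrite eqseq_cons addn2.
  apply/eqP/eqP => [[->] //|]; rewrite addn1 => -[/weight_eq0 ->] //.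
- rewrite -/(enum_weight n.+1) mem_cat weight_cons; case: b.
    by rewrite (mem_map (cons_inj _)) cons_notin_map_cons // orbF IH; apply/eqP/eqP; lia.
  by rewrite (mem_map (cons_inj _)) cons_notin_map_cons // IH; apply/eqP/eqP; lia.
Qed.

Lemma enum_weight_uniq n : uniq (enum_weight n).
Proof.
elim/ltn_ind: n => -[|[|n]] IH //=.
rewrite -/(enum_weight n.+1) cat_uniq !(map_inj_uniq (cons_inj _)) !IH //= andbT.
by apply/hasPn => _ /mapP[s _ ->]; rewrite cons_notin_map_cons.
Qed.

Lemma size_enum_weight n : size (enum_weight n) = fib n.+1.
Proof.
elim/ltn_ind: n => -[|[|n]] IH //.
by rewrite /= -/(enum_weight n.+1) size_cat !size_map !IH.
Qed.

Lemma card_uniq_seq (T : eqType) (t : seq T) : uniq t -> [set` t] #= `I_(size t).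
Proof.
move=> t_uniq; apply/card_set_bijP; exists (index^~ t); split.
- by move=> x /= xt; rewrite /= index_mem.
- by move=> x y /[!in_setE] /= xt yt; apply: index_inj.
- move=> k /= kt; have [x0 _] : exists x0 : T, True by case: t kt {t_uniq} => // x.
  by exists (nth x0 t k); rewrite /= ?mem_nth // index_uniq.
Qed.

(* [sgseq s] has multiplicity m := size s + 1, contains m + 1 + i iff s_i,
   and contains every n >= 2m. *)
Definition sgseq (s : seq bool) (n : nat) : bool :=
  [|| n == 0, n == (size s).+1,
      ((size s).+1 < n < 2 * (size s).+1) && nth false s (n - (size s).+2)
    | 2 * (size s).+1 <= n]%N.

Section SemigroupOfSeq.

Variable s : seq bool.

Lemma sgseq0 : sgseq s 0. Proof. by []. Qed.

Lemma sgseq_mult : sgseq s (size s).+1.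
Proof. by rewrite /sgseq eqxx orbT. Qed.

Lemma sgseq_large n : (2 * (size s).+1 <= n)%N -> sgseq s n.
Proof. by move=> n_large; rewrite /sgseq n_large !orbT. Qed.

Lemma sgseq_small n : (0 < n)%N -> (n <= size s)%N -> sgseq s n = false.
Proof.
move=> n0 n_small; apply/negbTE; rewrite /sgseq !negb_or negb_and.
by apply/and4P; split; lia.
Qed.

Lemma sgseq_mid i : (i < size s)%N -> sgseq s ((size s).+2 + i) = nth false s i.
Proof.
move=> i_lt; rewrite /sgseq addKn.
have -> : ((size s).+2 + i == 0) = false by lia.
have -> : ((size s).+2 + i == (size s).+1) = false by lia.
have -> : ((size s).+1 < (size s).+2 + i < 2 * (size s).+1)%N by lia.
have -> : (2 * (size s).+1 <= (size s).+2 + i)%N = false by lia.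
by rewrite orbF.
Qed.

Lemma sgseq_gap_lt n : ~~ sgseq s n -> (n < 2 * (size s).+1)%N.
Proof. by case: leqP => // n_large; rewrite sgseq_large. Qed.

Lemma sgseq_gt n : (0 < n)%N -> sgseq s n -> (size s < n)%N.
Proof. by move=> n0; case: leqP => // n_small; rewrite sgseq_small. Qed.

Lemma sgseq_add x y : sgseq s x -> sgseq s y -> sgseq s (x + y).
Proof.
case: (posnP x) => [-> //|x0]; case: (posnP y) => [-> ?|y0]; first by rewrite addn0.
move=> /(sgseq_gt x0) x_gt /(sgseq_gt y0) y_gt; apply: sgseq_large; lia.
Qed.

Definition gaps := [seq n <- iota 1 (2 * (size s).+1) | ~~ sgseq s n].

Lemma mem_gaps n : (n \in gaps) = ~~ sgseq s n.
Proof.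
rewrite mem_filter mem_iota andbC; case: (boolP (sgseq s n)) => [_|gap].
  by rewrite andbF.
have n0 : n != 0 by apply: contraNneq gap => ->.
by have := sgseq_gap_lt gap; rewrite andbT; lia.
Qed.

Lemma size_gaps : size gaps = weight s.
Proof.
rewrite size_filter (_ : 2 * (size s).+1 = size s + 1 + size s + 1)%N; last by lia.
rewrite !iotaD !count_cat /= sgseq_mult sgseq_large /=; last by lia.
rewrite (@eq_in_count _ _ predT (iota 1 (size s))); last first.
  by move=> n /[!mem_iota] n_lt /=; rewrite sgseq_small //; lia.
rewrite count_predT size_iota (_ : (1 + (size s + 1) = (size s).+2 + 0)%N); last by lia.
rewrite iotaDl count_map (@eq_in_count _ _ (negb \o nth false s)); last first.
  by move=> i /[!mem_iota] i_lt /=; rewrite sgseq_mid //; lia.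
by rewrite -count_map -/(mkseq _ _) mkseq_nth /weight; lia.
Qed.

Lemma genus_sgseq : has_genus [set n | sgseq s n] (weight s).
Proof.
rewrite /has_genus -size_gaps (_ : ~` _ = [set` gaps]).
  exact/card_uniq_seq/filter_uniq/iota_uniq.
by apply/seteqP; split => n /=; rewrite mem_gaps => /negP.
Qed.

Lemma numerical_semigroup_sgseq : numerical_semigroup [set n | sgseq s n].
Proof.
split; [exact: sgseq0 | split; first exact: sgseq_add].
by exists (weight s); exact: genus_sgseq.
Qed.

Lemma sgseq_frobenius_lt : s != [::] ->
  exists m f, is_multiplicity [set n | sgseq s n] m /\
              is_frobenius [set n | sgseq s n] f /\ (f < 2 * m)%N.
Proof.
rewrite -size_eq0 -lt0n => size_gt0.
have has_gap : exists n, ~~ sgseq s n by exists 1%N; rewrite sgseq_small.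
have [f gap_f f_max] := ex_maxnP has_gap (fun n gap => ltnW (sgseq_gap_lt gap)).
exists (size s).+1, f; split; [|split].
- by split=> //; split=> [|k k0 k_lt /=]; [exact: sgseq_mult | rewrite sgseq_small].
- split=> [|k f_lt]; first exact/negP.
  by apply/negbNE/negP => /f_max; lia.
- exact: sgseq_gap_lt.
Qed.

End SemigroupOfSeq.

Lemma sgseq_inj s t : [set n | sgseq s n] = [set n | sgseq t n] -> s = t.
Proof.
move=> /seteqP[st ts]; have E n : sgseq s n = sgseq t n by apply/idP/idP => [/st|/ts].
have size_st : size s = size t.
  case: (ltngtP (size s) (size t)) => // lt.
    by have := E (size s).+1; rewrite sgseq_mult sgseq_small.
  by have := E (size t).+1; rewrite sgseq_mult sgseq_small.
apply: (eq_from_nth (x0 := false) size_st) => i i_lt.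
by rewrite -sgseq_mid // E size_st sgseq_mid // -size_st.
Qed.

Lemma frobenius_lt_sgseq L m f : L 0 -> is_multiplicity L m -> is_frobenius L f ->
  (f < 2 * m)%N -> exists s, L = [set n | sgseq s n].
Proof.
move=> L0 [m0 [Lm below_m]] [_ above_f] f_lt.
pose s := mkseq (fun i => `[< L (m.+1 + i) >]) m.-1.
have size_s : (size s).+1 = m by rewrite size_mkseq; lia.
have L_sgseq n : L n <-> sgseq s n.
  case: (posnP n) => [->|n0]; first by split=> _; [exact: sgseq0 | exact: L0].
  case: (ltngtP n m) => [n_lt|m_lt|->]; last by split=> _ //; rewrite -{1}size_s sgseq_mult.
    by rewrite sgseq_small; [split=> // /(below_m n n0 n_lt) | | lia].
  case: (ltnP n (2 * m)) => [n_lt|n_ge].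
    have n_mid : n = ((size s).+2 + (n - m.+1))%N by lia.
    by rewrite {2}n_mid sgseq_mid ?nth_mkseq ?subnKC ?asboolE //; lia.
  by split=> _; [apply: sgseq_large; lia | apply: above_f; lia].
by exists s; apply/seteqP; split=> n /L_sgseq.
Qed.

Theorem proposition2p3 (g : nat) : (0 < g)%N ->
  [set L : set nat | numerical_semigroup L /\ has_genus L g /\
     exists m f, is_multiplicity L m /\ is_frobenius L f /\ (f < 2 * m)%N]
  #= `I_(fib g.+1).
Proof.
move=> g_gt0.
set S := [set L | _].
have -> : S = (fun s => [set n | sgseq s n]) @` [set` enum_weight g].
  apply/seteqP; split=> [L [sgL [genusL [m [f [multL [frobL f_lt]]]]]]|L [s]].
    have [s eqL] := frobenius_lt_sgseq sgL.1 multL frobL f_lt.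
    exists s => //=; rewrite mem_enum_weight; apply/eqP/card_eq_II.
    by apply: card_eq_trans (card_esym _) genusL; rewrite eqL; exact: genus_sgseq.
  rewrite /= mem_enum_weight => /eqP ws <-; rewrite /S -ws.
  split; [exact: numerical_semigroup_sgseq | split; first exact: genus_sgseq].
  by apply: sgseq_frobenius_lt; apply: contraTneq g_gt0 => s_nil; rewrite -ws s_nil.
rewrite -size_enum_weight; apply: card_eq_trans (card_uniq_seq (enum_weight_uniq g)).
by apply: inj_card_eq => s t _ _; exact: sgseq_inj.
Qed.
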